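(* Let $N>0$, $m>0$, $F>0$, $\alpha>0$, $w>0$ be fixed with $Nm>\alpha$, and for $g\geq 0$, $\tau\in(0,1)$, $L_g\geq 0$ define \[ L=\frac{N\left[(1-\tau)(mL_g+\alpha F)+(mg+F)mN\right]}{\alpha+(Nm-\alpha)\tau},\qquad q=\frac{(1-\tau)(L+L_g-\alpha g)}{\left(Nm+\alpha(1-\tau)\right)(L+L_g)}, \] \[ p=\frac{L+L_g}{L+L_g-\alpha g}\left(mw+\frac{\alpha(1-\tau)w}{N}\right),\qquad \Pi=\left((L+L_g)q+g\right)(p-mw)-Fw, \] regarded as functions of $(g,\tau,L_g)$, and let \[ \Lambda=(1-Nmq)\left(\frac{Nm}{1-\tau}+2\alpha\right)g-N(mg+F). \] Then at any point $(g,\tau,L_g)$: $\frac{\partial \Pi}{\partial L_g}<0$ if $L_g<\Lambda$; $\frac{\partial \Pi}{\partial L_g}=0$ if $L_g=\Lambda$; and $\frac{\partial \Pi}{\partial L_g}>0$ if $L_g>\Lambda$.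
   Context: These are the symmetric-equilibrium private employment $L$, per-capita consumption $q$ of each variety, price $p$, and profit $\Pi$ of each firm in a monopolistic-competition general equilibrium model with a measure $N$ of firms, marginal and fixed labor inputs $m$ and $F$, CARA utility parameter $\alpha$, nominal wage $w$, income tax rate $\tau$, government purchase $g$ of each variety, and government employment $L_g$. Here $\Lambda$ is evaluated at the same point (with $q$ the equilibrium value there). Partial derivatives are taken in $(g,\tau,L_g)$ with other parameters fixed. *)

From Stdlib Require Import Reals.
From Coquelicot Require Import Coquelicot.
Open Scope R_scope.

Definition Lpriv (N m F alpha : R) (g tau Lg : R) : R :=
  N * ((1 - tau) * (m * Lg + alpha * F) + (m * g + F) * m * N)
  / (alpha + (N * m - alpha) * tau).

Definition qeq (N m F alpha : R) (g tau Lg : R) : R :=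
  let L := Lpriv N m F alpha g tau Lg in
  (1 - tau) * (L + Lg - alpha * g)
  / ((N * m + alpha * (1 - tau)) * (L + Lg)).

Definition peq (N m F alpha w : R) (g tau Lg : R) : R :=
  let L := Lpriv N m F alpha g tau Lg in
  (L + Lg) / (L + Lg - alpha * g) * (m * w + alpha * (1 - tau) * w / N).

Definition Profit (N m F alpha w : R) (g tau Lg : R) : R :=
  let L := Lpriv N m F alpha g tau Lg in
  ((L + Lg) * qeq N m F alpha g tau Lg + g)
  * (peq N m F alpha w g tau Lg - m * w) - F * w.

Definition Lambda (N m F alpha : R) (g tau Lg : R) : R :=
  (1 - N * m * qeq N m F alpha g tau Lg) * (N * m / (1 - tau) + 2 * alpha) * g
  - N * (m * g + F).

(** With [S = L + L_g] and [u = S - alpha g], the equilibrium formulas collapse to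
    [Pi = w alpha ((1 - tau) u + c g)^2 / (c N u) - F w], where
    [c = N m + alpha (1 - tau)], and [u] is affine in [L_g] with positive slope.
    Differentiating, [dPi/dL_g] is a positive multiple of the gap
    [(1 - tau) u - c g]; an independent rearrangement shows that [L_g - Lambda]
    is a positive multiple of the same gap, so both have the same sign. *)

From Stdlib Require Import Reals Lra Psatz.
From Coquelicot Require Import Coquelicot.
Open Scope R_scope.

Section Equilibrium.

Variables N m F alpha w g tau : R.
Hypotheses (HN : 0 < N) (Hm : 0 < m) (HF : 0 < F) (Ha : 0 < alpha) (Hw : 0 < w)
  (HNm : N * m > alpha) (Hg : 0 <= g) (Ht0 : 0 < tau) (Ht1 : tau < 1).

Definition denL : R := alpha + (N * m - alpha) * tau.
Definition denq : R := N * m + alpha * (1 - tau).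
Definition net_labour_offset : R := N * alpha * (1 - tau) * F + N * N * m * F.

Definition total_labour (x : R) : R := Lpriv N m F alpha g tau x + x.
Definition net_labour (x : R) : R := total_labour x - alpha * g.
Definition labour_gap (x : R) : R := (1 - tau) * net_labour x - denq * g.

Definition reduced_profit (y : R) : R :=
  w * alpha / (denq * N) * ((1 - tau) * y + denq * g) ^ 2 / y - F * w.

Lemma denL_pos : 0 < denL.
Proof. unfold denL; nra. Qed.

Lemma denq_pos : 0 < denq.
Proof. unfold denq; nra. Qed.

Lemma net_labour_offset_pos : 0 < net_labour_offset.
Proof.
  unfold net_labour_offset.
  assert (0 < N * alpha * (1 - tau) * F) by (repeat apply Rmult_lt_0_compat; lra).
  assert (0 < N * N * m * F) by (repeat apply Rmult_lt_0_compat; lra).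
  lra.
Qed.

Lemma total_labour_affine (x : R) :
  total_labour x * denL = denq * x + N * alpha * (1 - tau) * F + N * N * m * (m * g + F).
Proof.
  pose proof denL_pos.
  unfold total_labour, Lpriv, denL, denq in *; field; lra.
Qed.

Lemma net_labour_lower_bound (x : R) :
  denq * x + net_labour_offset <= net_labour x * denL.
Proof.
  pose proof denL_pos.
  assert (Hcross : 0 <= g * (N * N * m * m - alpha * denL)).
  { apply Rmult_le_pos; [lra|].
    assert (denL < N * m) by (unfold denL; nra).
    assert (alpha * denL < N * m * (N * m)) by (apply Rmult_le_0_lt_compat; lra).
    lra. }
  unfold net_labour; rewrite Rmult_minus_distr_r, total_labour_affine.
  unfold net_labour_offset; lra.
Qed.

Lemma net_labour_pos_near (x0 : R) : 0 <= x0 -> locally x0 (fun x => 0 < net_labour x).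
Proof.
  intros Hx0.
  pose proof denL_pos; pose proof denq_pos; pose proof net_labour_offset_pos.
  assert (Hbound : - (net_labour_offset / denq) < x0).
  { enough (0 < net_labour_offset / denq) by lra. apply Rdiv_lt_0_compat; lra. }
  apply (filter_imp (fun x => - (net_labour_offset / denq) < x)); [|exact (open_gt _ _ Hbound)].
  intros x Hx.
  assert (0 < denq * x + net_labour_offset).
  { apply (Rmult_lt_compat_l denq) in Hx; [|lra].
    replace (denq * - (net_labour_offset / denq)) with (- net_labour_offset) in Hx
      by (field; lra).
    lra. }
  pose proof (net_labour_lower_bound x).
  apply (Rmult_lt_reg_r denL); lra.
Qed.

Lemma net_labour_pos (x : R) : 0 <= x -> 0 < net_labour x.
Proof. intros Hx; exact (locally_singleton _ _ (net_labour_pos_near x Hx)). Qed.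

Lemma Profit_reduced (x : R) :
  0 < net_labour x -> Profit N m F alpha w g tau x = reduced_profit (net_labour x).
Proof.
  intros Hu.
  assert (HS : 0 < total_labour x) by (unfold net_labour in Hu; nra).
  pose proof denq_pos.
  unfold Profit, reduced_profit, qeq, peq; cbv zeta.
  unfold net_labour, total_labour, denq in *.
  set (L := Lpriv N m F alpha g tau x) in *.
  field; repeat split; lra.
Qed.

Lemma is_derive_net_labour (x : R) : is_derive net_labour x (denq / denL).
Proof.
  pose proof denL_pos.
  unfold net_labour, total_labour, Lpriv, denL, denq in *.
  auto_derive; [lra|].
  field; lra.
Qed.

Lemma is_derive_reduced_profit (y : R) : y <> 0 ->
  is_derive reduced_profit y
    (w * alpha / (denq * N) * ((1 - tau) * y + denq * g) * ((1 - tau) * y - denq * g) / y ^ 2).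
Proof.
  intros Hy. pose proof denq_pos.
  unfold reduced_profit; auto_derive; [exact Hy|].
  field; repeat split; lra.
Qed.

Lemma Profit_derivative_gap (x : R) : 0 <= x ->
  exists2 k, 0 < k & is_derive (fun t => Profit N m F alpha w g tau t) x (k * labour_gap x).
Proof.
  intros Hx.
  pose proof denL_pos; pose proof denq_pos.
  set (u := net_labour x).
  assert (Hu : 0 < u) by exact (net_labour_pos x Hx).
  exists (w * alpha / (denq * N) * ((1 - tau) * u + denq * g) / u ^ 2 * (denq / denL)).
  { assert (0 < (1 - tau) * u + denq * g) by nra.
    apply Rmult_lt_0_compat; [|apply Rdiv_lt_0_compat; lra].
    apply Rdiv_lt_0_compat; [|apply pow_lt; lra].
    apply Rmult_lt_0_compat; [apply Rdiv_lt_0_compat|]; nra. }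
  apply is_derive_ext_loc with (f := fun t => reduced_profit (net_labour t)).
  - apply (filter_imp _ _ (fun t Ht => eq_sym (Profit_reduced t Ht))), net_labour_pos_near, Hx.
  - replace (_ * labour_gap x) with (denq / denL *
      (w * alpha / (denq * N) * ((1 - tau) * u + denq * g) * ((1 - tau) * u - denq * g) / u ^ 2))
      by (unfold labour_gap; fold u; field; lra).
    apply (is_derive_comp reduced_profit net_labour).
    + apply is_derive_reduced_profit; lra.
    + apply is_derive_net_labour.
Qed.

Lemma Lambda_gap (x : R) : 0 <= x ->
  exists2 k, 0 < k & x - Lambda N m F alpha g tau x = k * labour_gap x.
Proof.
  intros Hx.
  pose proof denL_pos; pose proof denq_pos.
  assert (Hu : 0 < net_labour x) by exact (net_labour_pos x Hx).
  assert (HS : 0 < total_labour x) by (unfold net_labour in Hu; nra).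
  exists ((total_labour x * denL + N * m * alpha * (1 - tau) * g)
          / (denq * total_labour x * (1 - tau))).
  { apply Rdiv_lt_0_compat.
    - assert (0 <= N * m * alpha * (1 - tau) * g) by (repeat apply Rmult_le_pos; lra). nra.
    - repeat apply Rmult_lt_0_compat; lra. }
  (* Express [x] through [S = total_labour x], in which [Lambda] is rational. *)
  assert (Ex : x = (total_labour x * denL
                    - (N * alpha * (1 - tau) * F + N * N * m * (m * g + F))) / denq)
    by (rewrite total_labour_affine; field; lra).
  unfold Lambda, labour_gap, net_labour; fold denq.
  change (qeq N m F alpha g tau x) with
    ((1 - tau) * (total_labour x - alpha * g) / (denq * total_labour x)).
  set (S := total_labour x) in *.
  rewrite Ex at 1.
  unfold denL, denq in *; field; repeat split; lra.
Qed.

End Equilibrium.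

Theorem theorem5 (N m F alpha w : R)
  (HN : 0 < N) (Hm : 0 < m) (HF : 0 < F) (Ha : 0 < alpha) (Hw : 0 < w)
  (HNm : N * m > alpha)
  (g tau Lg : R) (Hg : 0 <= g) (Ht0 : 0 < tau) (Ht1 : tau < 1) (HLg : 0 <= Lg) :
  let dPi := Derive (fun x => Profit N m F alpha w g tau x) Lg in
  let Lam := Lambda N m F alpha g tau Lg in
  ex_derive (fun x => Profit N m F alpha w g tau x) Lg /\
  (Lg < Lam -> dPi < 0) /\
  (Lg = Lam -> dPi = 0) /\
  (Lg > Lam -> dPi > 0).
Proof.
  intros dPi Lam.
  destruct (Profit_derivative_gap N m F alpha w g tau HN Hm HF Ha Hw HNm Hg Ht0 Ht1 Lg HLg)
    as [kd Hkd Hder].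
  destruct (Lambda_gap N m F alpha g tau HN Hm HF Ha HNm Hg Ht0 Ht1 Lg HLg) as [kl Hkl Hlam].
  assert (HdPi : dPi = kd * labour_gap N m F alpha g tau Lg) by (apply is_derive_unique, Hder).
  fold Lam in Hlam; rewrite HdPi.
  set (X := labour_gap N m F alpha g tau Lg) in *.
  split; [exists (kd * X); exact Hder|].
  repeat split; intros H.
  - assert (X < 0) by nra; nra.
  - assert (X = 0) by nra; subst X; nra.
  - assert (X > 0) by nra; nra.
Qed.
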